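(* Let $(H,L_H)$ be a right-resolving and follower-separated labeled graph. Then $L_H$ is injective on the set $\mathcal R(L_H)$ of regular rays in $X_H$.
   Context: A labeled graph $(H,L_H)$: finite directed graph (vertices $V_H$, edges $E_H$, source/terminal maps $s_H,t_H$) without sinks or sources, labeling $L_H:E_H\to A$, edge shift $X_H$; $L_H$ acts coordinatewise, giving $L_H:X_H\to Y=L_H(X_H)$. Right-resolving: distinct edges with the same source have distinct labels. $f_H(v)=\{L_H(x): x$ a right-infinite path starting at $v\}$; follower-separated: $f_H(v)=f_H(w)$ implies $v=w$. For $x\in X_H$, $\mathbb U(x)=\{z\in X_H:\exists N\ \forall i\le N,\ z_i=x_i\}$ and similarly in $Y$; $x$ is a regular ray if $L_H$ maps $\mathbb U(x)$ onto $\mathbb U(L_H(x))$; $\mathcal R(L_H)$ is the set of regular rays. *)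

From mathcomp Require Import all_boot all_order all_algebra.
Set Implicit Arguments. Unset Strict Implicit. Unset Printing Implicit Defensive.
Import Order.TTheory GRing.Theory Num.Theory.
Local Open Scope ring_scope.

Record lgraph (A : Type) := LGraph {
  V : finType;
  E : finType;
  src : E -> V;
  tgt : E -> V;
  lab : E -> A }.

Section LGraphDefs.
Variables (A : Type) (H : lgraph A).

Definition no_sinks : Prop := forall v : V H, exists e : E H, src e = v.
Definition no_sources : Prop := forall v : V H, exists e : E H, tgt e = v.

Definition right_resolving : Prop :=
  forall e e' : E H, src e = src e' -> e <> e' -> lab e <> lab e'.

Definition edge_shift (x : int -> E H) : Prop :=
  forall i : int, tgt (x i) = src (x (i + 1)).

Definition Lmap (x : int -> E H) : int -> A := fun i => lab (x i).

Definition label_shift (y : int -> A) : Prop :=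
  exists x, edge_shift x /\ Lmap x = y.

Definition follower (v : V H) : (nat -> A) -> Prop :=
  fun w => exists p : nat -> E H,
    src (p 0%N) = v /\ (forall n : nat, tgt (p n) = src (p n.+1)) /\
    w = (fun n => lab (p n)).

Definition follower_separated : Prop :=
  forall v w : V H, follower v = follower w -> v = w.

Definition UX (x : int -> E H) : (int -> E H) -> Prop :=
  fun z => edge_shift z /\ exists N : int, forall i : int, i <= N -> z i = x i.
Definition UY (y : int -> A) : (int -> A) -> Prop :=
  fun w => label_shift w /\ exists N : int, forall i : int, i <= N -> w i = y i.

Definition regular_ray (x : int -> E H) : Prop :=
  edge_shift x /\
  (forall z, UX x z -> UY (Lmap x) (Lmap z)) /\
  (forall w, UY (Lmap x) w -> exists z, UX x z /\ Lmap z = w).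

End LGraphDefs.

From mathcomp Require Import all_boot all_order all_algebra.
From mathcomp Require Import zify.
From Stdlib Require Import FunctionalExtensionality PropExtensionality.
Import Order.TTheory GRing.Theory Num.Theory.
Local Open Scope ring_scope.

(* Let x, x' be regular rays with the same label sequence y, and fix a
   coordinate i.  Any word w of f_H(s(x_i)) can be spliced after the left
   half-ray of x; the result lies in U(x), so its label lies in U(y), and by
   regularity of x' it lifts to some z' in U(x').  Since z' agrees with x' far
   to the left and H is right-resolving, z' agrees with x' up to i - 1, hence
   w lies in f_H(s(x'_i)).  By symmetry s(x_i) and s(x'_i) have the same
   follower set, so they are equal; x_i and x'_i then have the same source
   and the same label, hence are equal. *)

Section RegularRays.
Variables (A : Type) (H : lgraph A).

Lemma follower_edge_shift (z : int -> E H) (i : int) : edge_shift z ->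
  follower (src (z i)) (fun n : nat => lab (z (i + n%:Z))).
Proof.
move=> ez; exists (fun n : nat => z (i + n%:Z)); split; first by rewrite addr0.
by split=> // n; rewrite ez; congr (src (z _)); lia.
Qed.

Definition splice (x : int -> E H) (i : int) (p : nat -> E H) : int -> E H :=
  fun j => if j < i then x j else p (absz (j - i)%R).

Section Splice.
Variables (x : int -> E H) (i : int) (p : nat -> E H).

Lemma splice_tail (n : nat) : splice x i p (i + n%:Z) = p n.
Proof.
rewrite /splice; have -> : (i + n%:Z < i) = false by lia.
by rewrite addrC addKr.
Qed.

Lemma splice_edge_shift : edge_shift x -> src (p 0%N) = src (x i) ->
  (forall n : nat, tgt (p n) = src (p n.+1)) -> edge_shift (splice x i p).
Proof.
move=> ex p0 ep j; rewrite /splice.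
case: (ltrP (j + 1) i) => [lt_j1i|le_ij1].
  by have -> : j < i by lia.
case: (ltrP j i) => [lt_ji|le_ij].
  have -> : absz (j + 1 - i)%R = 0%N by lia.
  by rewrite ex p0; congr (src (x _)); lia.
by have -> : absz (j + 1 - i)%R = (absz (j - i)%R).+1 by lia.
Qed.

Lemma splice_UX : edge_shift x -> src (p 0%N) = src (x i) ->
  (forall n : nat, tgt (p n) = src (p n.+1)) -> UX x (splice x i p).
Proof.
move=> ex p0 ep; split; first exact: splice_edge_shift.
by exists (i - 1) => k le_k; rewrite /splice; have -> : k < i by lia.
Qed.

End Splice.

Hypothesis rr : right_resolving H.

Lemma right_resolving_inj (e e' : E H) :
  src e = src e' -> lab e = lab e' -> e = e'.
Proof.
move=> eq_src eq_lab; case: (eqVneq e e') => // /eqP ne.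
by case: (rr _ _ eq_src ne eq_lab).
Qed.

Lemma edge_shift_agree_of_lab_agree (z x : int -> E H) (N : int) (m : nat) :
  edge_shift z -> edge_shift x -> z N = x N ->
  (forall k : nat, (k <= m)%N -> lab (z (N + k%:Z)) = lab (x (N + k%:Z))) ->
  z (N + m%:Z) = x (N + m%:Z).
Proof.
move=> ez ex eqN eq_lab; elim: m eq_lab => [|m IH] eq_lab; first by rewrite addr0.
have lab_m1 := eq_lab m.+1 (leqnn _).
have shift : N + m.+1%:Z = (N + m%:Z) + 1 by lia.
rewrite shift in lab_m1 *; apply: right_resolving_inj => //.
by rewrite -ez -ex IH // => k le_km; apply: eq_lab; lia.
Qed.

Lemma UX_agree_of_lab_agree (x z : int -> E H) (M : int) : edge_shift x -> UX x z ->
  (forall j, j <= M -> lab (z j) = lab (x j)) -> forall j, j <= M -> z j = x j.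
Proof.
move=> ex [ez [N eq_le_N]] eq_lab j le_jM.
case: (lerP j N) => [le_jN|lt_Nj]; first exact: eq_le_N.
have -> : j = N + (absz (j - N)%R)%:Z by lia.
apply: edge_shift_agree_of_lab_agree => //; first exact: eq_le_N.
by move=> k le_k; apply: eq_lab; lia.
Qed.

Lemma regular_ray_follower_sub (x x' : int -> E H) (i : int) (w : nat -> A) :
  regular_ray x -> regular_ray x' -> Lmap x = Lmap x' ->
  follower (src (x i)) w -> follower (src (x' i)) w.
Proof.
move=> [ex [lab_UX _]] [ex' [_ lift_UY]] eqL [p [p0 [ep ->]]].
have [z' [/[dup] uz' [ez' _] eqLz']] : exists z', UX x' z' /\ Lmap z' = Lmap (splice x i p).
  by apply: lift_UY; rewrite -eqL; exact/lab_UX/splice_UX.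
have lab_z' j : lab (z' j) = lab (splice x i p j) by rewrite -/(Lmap z' j) eqLz'.
have agree : z' (i - 1) = x' (i - 1).
  apply: (UX_agree_of_lab_agree _ _ (i - 1) ex' uz') => // j le_j.
  rewrite lab_z' /splice ifT; last by lia.
  exact: (congr1 (@^~ j) eqL).
have -> : (fun n : nat => lab (p n)) = (fun n : nat => lab (z' (i + n%:Z))).
  by apply: functional_extensionality => n; rewrite lab_z' splice_tail.
by rewrite -[i](subrK 1) -ex' -agree ez' subrK; exact: follower_edge_shift.
Qed.

Lemma regular_ray_follower_eq (x x' : int -> E H) (i : int) :
  regular_ray x -> regular_ray x' -> Lmap x = Lmap x' ->
  follower (src (x i)) = follower (src (x' i)).
Proof.
move=> rx rx' eqL; apply: functional_extensionality => w.
by apply: propositional_extensionality; split; apply: regular_ray_follower_sub.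
Qed.

End RegularRays.

Theorem lemma2p8 (A : Type) (H : lgraph A) :
  no_sinks H -> no_sources H ->
  right_resolving H -> follower_separated H ->
  forall x x' : int -> E H,
    regular_ray x -> regular_ray x' -> Lmap x = Lmap x' -> x = x'.
Proof.
move=> _ _ rr fs x x' rx rx' eqL; apply: functional_extensionality => i.
apply: right_resolving_inj => //; last exact: (congr1 (@^~ i) eqL).
exact/fs/regular_ray_follower_eq.
Qed.
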